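(* Let $n\ge 1$ and $d\ge 1$ be integers. Let $p:\mathbb{R}^3\to\mathbb{C}$ be a complex-valued homogeneous quadratic polynomial which is harmonic and horizontally conformal, i.e. $\tau(p)=0$ and $\kappa(p,p)=0$ on $\mathbb{R}^3$. Let $P_d,Q_d:\mathbb{C}^n\to\mathbb{C}$ be two linearly independent homogeneous polynomials in the complex variables $(z_1,\dots,z_n)$ (holomorphic, i.e. not involving $\bar z_k$) of the same degree $d$. Identify $\mathbb{R}^3\times\mathbb{C}^n$ with the Euclidean space $\mathbb{R}^{2n+3}$, and let $\mathcal Z(Q_d)=\{(x,z)\in\mathbb{R}^3\times\mathbb{C}^n : Q_d(z)=0\}$. Define $$\hat\Phi_d(x_1,x_2,x_3,z_1,\dots,z_n)=\frac{p(x_1,x_2,x_3)^{d/2}+P_d(z_1,\dots,z_n)}{Q_d(z_1,\dots,z_n)},$$ on $(\mathbb{R}^3\times\mathbb{C}^n)\setminus\mathcal Z(Q_d)$ if $d$ is even, and on $(\mathbb{R}^3\times\mathbb{C}^n)\setminus(\mathcal Z(Q_d)\cup\{(x,z): p(x)\in\mathbb{R},\ p(x)\le 0\})$ if $d$ is odd, where $p^{1/2}$ denotes the principal square root on $\mathbb{C}\setminus(-\infty,0]$. Then $\hat\Phi_d$ is a harmonic morphism on its domain.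
   Context: For complex-valued $C^2$ functions $\phi,\psi$ on $\mathbb{R}^3\times\mathbb{C}^n\cong\mathbb{R}^{2n+3}$ (Euclidean metric, $z_k=x_{2k+2}+i x_{2k+3}$), the tension field is $\tau(\phi)=\sum_{k=1}^3\partial^2\phi/\partial x_k^2+4\sum_{k=1}^n\partial^2\phi/\partial z_k\partial\bar z_k$ (the Laplacian) and the conformality operator is $\kappa(\phi,\psi)=\sum_{k=1}^3\frac{\partial\phi}{\partial x_k}\frac{\partial\psi}{\partial x_k}+2\sum_{k=1}^n\big(\frac{\partial\phi}{\partial z_k}\frac{\partial\psi}{\partial\bar z_k}+\frac{\partial\phi}{\partial\bar z_k}\frac{\partial\psi}{\partial z_k}\big)$, i.e. the complex-bilinear extension of the metric applied to the gradients. A map $\phi:(M,g)\to\mathbb{C}$ is a harmonic morphism if for every harmonic function $f$ on an open $U\subset\mathbb{C}$ with $\phi^{-1}(U)\neq\emptyset$, $f\circ\phi$ is harmonic on $\phi^{-1}(U)$; equivalently (Fuglede), $\tau(\phi)=0$ and $\kappa(\phi,\phi)=0$. *)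

From Stdlib Require Import Reals List.
From Coquelicot Require Import Coquelicot.
Open Scope R_scope.

(** Points of R^m are represented as [pt := nat -> R]; only coordinates
    0..m-1 are relevant (0-indexed: coordinate k is x_{k+1} of the paper). *)
Definition pt := nat -> R.

Definition upd (x : pt) (k : nat) (t : R) : pt :=
  fun j => if Nat.eqb j k then t else x j.

Definition near_m (m : nat) (x y : pt) (e : R) : Prop :=
  forall k, (k < m)%nat -> Rabs (y k - x k) < e.

Definition open_m (m : nat) (U : pt -> Prop) : Prop :=
  forall x, U x -> exists e, 0 < e /\ forall y, near_m m x y e -> U y.

Definition cont_at_m (m : nat) (g : pt -> R) (x : pt) : Prop :=
  forall eps, 0 < eps -> exists del, 0 < del /\
    forall y, near_m m x y del -> Rabs (g y - g x) < eps.

Definition partial (k : nat) (g : pt -> R) : pt -> R :=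
  fun x => Derive (fun t => g (upd x k t)) (x k).

Definition C2_on (m : nat) (U : pt -> Prop) (g : pt -> R) : Prop :=
  forall x, U x ->
    cont_at_m m g x /\
    forall j, (j < m)%nat ->
      ex_derive (fun t => g (upd x j t)) (x j) /\
      cont_at_m m (partial j g) x /\
      forall k, (k < m)%nat ->
        ex_derive (fun t => partial j g (upd x k t)) (x k) /\
        cont_at_m m (partial k (partial j g)) x.

Fixpoint rsum (m : nat) (f : nat -> R) : R :=
  match m with O => 0 | S m' => rsum m' f + f m' end.

Fixpoint csum (m : nat) (f : nat -> C) : C :=
  match m with O => RtoC 0 | S m' => Cplus (csum m' f) (f m') end.

Fixpoint cpow (w : C) (k : nat) : C :=
  match k with O => RtoC 1 | S k' => Cmult w (cpow w k') end.

Definition lap (m : nat) (g : pt -> R) (x : pt) : R :=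
  rsum m (fun k => partial k (partial k g) x).

Definition harmonic_on (m : nat) (U : pt -> Prop) (F : pt -> C) : Prop :=
  open_m m U /\
  C2_on m U (fun x => Re (F x)) /\ C2_on m U (fun x => Im (F x)) /\
  forall x, U x -> lap m (fun x => Re (F x)) x = 0 /\ lap m (fun x => Im (F x)) x = 0.

Definition harmonic_C (U : C -> Prop) (f : C -> C) : Prop :=
  harmonic_on 2 (fun x => U (x 0%nat, x 1%nat)) (fun x => f (x 0%nat, x 1%nat)).

Definition harmonic_morphism (m : nat) (W : pt -> Prop) (phi : pt -> C) : Prop :=
  open_m m W /\
  forall (U : C -> Prop) (f : C -> C),
    harmonic_C U f ->
    (exists x, W x /\ U (phi x)) ->
    harmonic_on m (fun x => W x /\ U (phi x)) (fun x => f (phi x)).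

Definition cpartial (k : nat) (F : pt -> C) : pt -> C :=
  fun x => (partial k (fun y => Re (F y)) x, partial k (fun y => Im (F y)) x).

Definition tension (m : nat) (F : pt -> C) (x : pt) : C :=
  csum m (fun k => cpartial k (cpartial k F) x).

Definition kappa (m : nat) (F G : pt -> C) (x : pt) : C :=
  csum m (fun k => Cmult (cpartial k F x) (cpartial k G x)).

Definition quad (a : nat -> nat -> C) (x : pt) : C :=
  csum 3 (fun i => csum 3 (fun j => Cmult (a i j) (RtoC (x i * x j)))).

(** homogeneous degree-d holomorphic polynomial in z_0..z_{n-1}: a finite
    sum of terms c * z_{w 0} * ... * z_{w (d-1)} *)
Definition hpoly := list (C * (nat -> nat)).

Definition hp_wf (n d : nat) (l : hpoly) : Prop :=
  forall t, In t l -> forall j, (j < d)%nat -> (snd t j < n)%nat.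

Definition hp_eval (d : nat) (l : hpoly) (z : nat -> C) : C :=
  fold_right (fun t acc => Cplus (Cmult (fst t)
                (fold_right Cmult (RtoC 1) (map (fun j => z (snd t j)) (seq 0 d)))) acc)
             (RtoC 0) l.

(** complex coordinates: z_k (k = 0..n-1) = x_{2k+3} + i x_{2k+4} (0-indexed) *)
Definition zco (x : pt) : nat -> C := fun k => (x (2 * k + 3)%nat, x (2 * k + 4)%nat).

Definition csqrt (w : C) : C :=
  (sqrt ((Cmod w + Re w) / 2),
   (if Rlt_dec (Im w) 0 then -1 else 1) * sqrt ((Cmod w - Re w) / 2)).

Definition halfpow (d : nat) (w : C) : C :=
  if Nat.even d then cpow w (Nat.div2 d) else cpow (csqrt w) d.

Definition Phi_dom (d : nat) (a : nat -> nat -> C) (lQ : hpoly) (x : pt) : Prop :=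
  hp_eval d lQ (zco x) <> RtoC 0 /\
  (Nat.even d = true \/ ~ (Im (quad a x) = 0 /\ Re (quad a x) <= 0)).

Definition Phi_hat (d : nat) (a : nat -> nat -> C) (lP lQ : hpoly) (x : pt) : C :=
  Cdiv (Cplus (halfpow d (quad a x)) (hp_eval d lP (zco x))) (hp_eval d lQ (zco x)).

(** The proof rests on Fuglede's criterion in its sufficient direction.  If
    [Φ] is C² with [Δ Φ = 0] and [Σ_k (∂_k Φ)² = 0], then for any harmonic
    [f = g + i h] the chain rule gives, at each point,
    [Δ (g ∘ Φ) = g_uu Σ_k (Re ∂_kΦ)² + 2 g_uv Σ_k Re ∂_kΦ Im ∂_kΦ
                 + g_vv Σ_k (Im ∂_kΦ)² + g_u Re ΔΦ + g_v Im ΔΦ],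
    which vanishes because [Σ (Re ∂Φ)² = Σ (Im ∂Φ)²], [Σ Re ∂Φ Im ∂Φ = 0]
    and [g_uu + g_vv = 0].

    To verify the hypotheses for [Φ̂_d], fix at every point a totally isotropic
    subspace [S] of [C^m] (one with [Σ_k v_k w_k = 0] for all [v, w ∈ S]) and
    consider the harmonic C² functions whose gradients lie in [S].  By the
    product rule [Δ(GH) = H ΔG + G ΔH + 2 Σ_k ∂_kG ∂_kH], and the last term
    vanishes by isotropy; so this class is closed under sums and products,
    and likewise under inverses and principal square roots.  The subspace
    spanned by [∇p] and the [∇z_i] is totally isotropic: [∇p · ∇p = κ(p,p) = 0],
    [∇z_i · ∇z_l = 0], and [∇p], [∇z_i] have disjoint supports.  Since [p] and
    the [z_i] lie in the class, so does [Φ̂_d]. *)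

From Stdlib Require Import Reals List Lra Lia FunctionalExtensionality.
From Coquelicot Require Import Coquelicot.
Open Scope R_scope.

Lemma is_derive_val (f : R -> R) (x l l' : R) : is_derive f x l -> l = l' -> is_derive f x l'.
Proof. intros H ->; exact H. Qed.

Lemma is_derive_R_const (c x : R) : is_derive (fun _ : R => c) x 0.
Proof. apply (is_derive_const c x). Qed.

Lemma is_derive_R_id (x : R) : is_derive (fun t : R => t) x 1.
Proof. apply (is_derive_id x). Qed.

Lemma is_derive_R_plus (f g : R -> R) x a b : is_derive f x a -> is_derive g x b ->
  is_derive (fun t => f t + g t) x (a + b).
Proof. intros; apply (is_derive_plus f g); auto. Qed.

Lemma is_derive_R_minus (f g : R -> R) x a b : is_derive f x a -> is_derive g x b ->
  is_derive (fun t => f t - g t) x (a - b).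
Proof. intros; apply (is_derive_minus f g); auto. Qed.

Lemma is_derive_R_opp (f : R -> R) x a : is_derive f x a -> is_derive (fun t => - f t) x (- a).
Proof. intros; apply (is_derive_opp f); auto. Qed.

Lemma is_derive_R_ext (f g : R -> R) (x l : R) :
  (forall t, f t = g t) -> is_derive f x l -> is_derive g x l.
Proof. intros; apply (is_derive_ext f); auto. Qed.

Lemma near_m_mono m x y e e' : near_m m x y e -> e <= e' -> near_m m x y e'.
Proof. intros H He k Hk. eapply Rlt_le_trans; [apply H|]; auto. Qed.

Lemma near_m_refl m x e : 0 < e -> near_m m x x e.
Proof. intros He k _. rewrite Rminus_eq_0, Rabs_R0; exact He. Qed.

Lemma cont_comp_2d m (h : R -> R -> R) (g1 g2 : pt -> R) x :
  continuity_2d_pt h (g1 x) (g2 x) -> cont_at_m m g1 x -> cont_at_m m g2 x ->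
  cont_at_m m (fun y => h (g1 y) (g2 y)) x.
Proof.
  intros Hh H1 H2 eps Heps.
  destruct (Hh (mkposreal eps Heps)) as [d Hd].
  destruct (H1 d (cond_pos d)) as [d1 [Hd1 K1]].
  destruct (H2 d (cond_pos d)) as [d2 [Hd2 K2]].
  exists (Rmin d1 d2); split; [apply Rmin_pos; auto|].
  intros y Hy. apply (Hd (g1 y) (g2 y)).
  - apply K1, (near_m_mono _ _ _ _ _ Hy), Rmin_l.
  - apply K2, (near_m_mono _ _ _ _ _ Hy), Rmin_r.
Qed.

Lemma cont_const m c x : cont_at_m m (fun _ => c) x.
Proof. intros eps He; exists 1; split; [lra|]; intros; rewrite Rminus_eq_0, Rabs_R0; auto. Qed.

Lemma cont_coord m i x : (i < m)%nat -> cont_at_m m (fun y => y i) x.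
Proof. intros Hi eps He; exists eps; split; auto. Qed.

Lemma cont_ext m (g h : pt -> R) x : (forall y, g y = h y) -> cont_at_m m g x -> cont_at_m m h x.
Proof.
  intros E H eps He; destruct (H eps He) as [d [Hd K]]; exists d; split; auto.
  intros y Hy; rewrite <- !E; auto.
Qed.

Lemma cont_ext_loc m (g h : pt -> R) x e : 0 < e -> (forall y, near_m m x y e -> g y = h y) ->
  cont_at_m m g x -> cont_at_m m h x.
Proof.
  intros He E H eps Heps; destruct (H eps Heps) as [d [Hd K]]; exists (Rmin d e); split.
  - apply Rmin_pos; auto.
  - intros y Hy. rewrite <- (E y), <- (E x).
    + apply K, (near_m_mono _ _ _ _ _ Hy), Rmin_l.
    + apply near_m_refl; auto.
    + apply (near_m_mono _ _ _ _ _ Hy), Rmin_r.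
Qed.

Lemma cont_plus m g h x : cont_at_m m g x -> cont_at_m m h x -> cont_at_m m (fun y => g y + h y) x.
Proof.
  intros; apply (cont_comp_2d m (fun u v => u + v)); auto.
  apply continuity_2d_pt_plus; [apply continuity_2d_pt_id1|apply continuity_2d_pt_id2].
Qed.

Lemma cont_minus m g h x : cont_at_m m g x -> cont_at_m m h x -> cont_at_m m (fun y => g y - h y) x.
Proof.
  intros; apply (cont_comp_2d m (fun u v => u - v)); auto.
  apply continuity_2d_pt_minus; [apply continuity_2d_pt_id1|apply continuity_2d_pt_id2].
Qed.

Lemma cont_mult m g h x : cont_at_m m g x -> cont_at_m m h x -> cont_at_m m (fun y => g y * h y) x.
Proof.
  intros; apply (cont_comp_2d m (fun u v => u * v)); auto.
  apply continuity_2d_pt_mult; [apply continuity_2d_pt_id1|apply continuity_2d_pt_id2].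
Qed.

Lemma cont_comp m (f : R -> R) g x : continuity_pt f (g x) -> cont_at_m m g x ->
  cont_at_m m (fun y => f (g y)) x.
Proof.
  intros; apply (cont_comp_2d m (fun u v => f u) g g); auto.
  apply (continuity_1d_2d_pt_comp f (fun u v => u)); auto; apply continuity_2d_pt_id1.
Qed.

Lemma cont_opp m g x : cont_at_m m g x -> cont_at_m m (fun y => - g y) x.
Proof. intros; apply (cont_comp m Ropp); auto. apply continuity_pt_opp, continuity_pt_id. Qed.

Lemma cont_inv m g x : cont_at_m m g x -> g x <> 0 -> cont_at_m m (fun y => / g y) x.
Proof.
  intros; apply (cont_comp m Rinv); auto.
  apply continuity_pt_inv; auto; apply continuity_pt_id.
Qed.

Lemma cont_sq m g x : cont_at_m m g x -> cont_at_m m (fun y => g y ^ 2) x.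
Proof.
  intros; apply (cont_ext m (fun y => g y * (g y * 1))); [intros; reflexivity|].
  repeat apply cont_mult; auto; apply cont_const.
Qed.

Lemma cont_at_m_neq0 m f x : cont_at_m m f x -> f x <> 0 ->
  exists e, 0 < e /\ forall y, near_m m x y e -> f y <> 0.
Proof.
  intros C Hf. destruct (C (Rabs (f x)) (Rabs_pos_lt _ Hf)) as [d [Hd K]].
  exists d; split; auto. intros y Hy E. specialize (K y Hy). rewrite E in K.
  rewrite Rminus_0_l, Rabs_Ropp in K. lra.
Qed.

Lemma cont_at_m_pos m f x : cont_at_m m f x -> 0 < f x ->
  exists e, 0 < e /\ forall y, near_m m x y e -> 0 < f y.
Proof.
  intros C Hf. destruct (C (f x) Hf) as [d [Hd K]].
  exists d; split; auto. intros y Hy. specialize (K y Hy). apply Rabs_def2 in K. lra.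
Qed.

Definition ccont m (G : pt -> C) x :=
  cont_at_m m (fun y => Re (G y)) x /\ cont_at_m m (fun y => Im (G y)) x.

Definition is_cderive (g : R -> C) t (l : C) :=
  is_derive (fun s => Re (g s)) t (Re l) /\ is_derive (fun s => Im (g s)) t (Im l).

Lemma pair_re_im (z : C) : (Re z, Im z) = z.
Proof. destruct z; reflexivity. Qed.

Lemma Cmod2_neq0 (z : C) : z <> 0%C -> Re z ^ 2 + Im z ^ 2 <> 0.
Proof.
  destruct z as [a b]; unfold Re, Im; simpl fst; simpl snd. intros Hz E; apply Hz.
  assert (a = 0) by nra. assert (b = 0) by nra. subst; reflexivity.
Qed.

Lemma ccont_const m (c : C) x : ccont m (fun _ => c) x.
Proof. split; apply cont_const. Qed.

Lemma ccont_plus m G H x : ccont m G x -> ccont m H x -> ccont m (fun y => G y + H y)%C x.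
Proof. intros [A B] [C D]; split; simpl; apply cont_plus; auto. Qed.

Lemma ccont_opp m G x : ccont m G x -> ccont m (fun y => - G y)%C x.
Proof. intros [A B]; split; simpl; apply cont_opp; auto. Qed.

Lemma ccont_mult m G H x : ccont m G x -> ccont m H x -> ccont m (fun y => G y * H y)%C x.
Proof.
  intros [A B] [C D]; split; simpl.
  - apply cont_minus; apply cont_mult; auto.
  - apply cont_plus; apply cont_mult; auto.
Qed.

Lemma ccont_inv m G x : ccont m G x -> G x <> 0%C -> ccont m (fun y => / G y)%C x.
Proof.
  intros [A B] Hn.
  assert (CD : cont_at_m m (fun y => / (fst (G y) ^ 2 + snd (G y) ^ 2)) x).
  { apply cont_inv; [apply cont_plus; apply cont_sq; auto|]. apply (Cmod2_neq0 _ Hn). }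
  split; simpl; unfold Rdiv; apply cont_mult; auto. apply cont_opp; auto.
Qed.

Lemma is_cderive_const (c : C) t : is_cderive (fun _ => c) t 0%C.
Proof. split; apply is_derive_R_const. Qed.

Lemma is_cderive_plus g h t a b : is_cderive g t a -> is_cderive h t b ->
  is_cderive (fun s => g s + h s)%C t (a + b)%C.
Proof. intros [A B] [C D]; split; simpl; apply is_derive_R_plus; auto. Qed.

Lemma is_cderive_opp g t a : is_cderive g t a -> is_cderive (fun s => - g s)%C t (- a)%C.
Proof. intros [A B]; split; simpl; apply is_derive_R_opp; auto. Qed.

Lemma is_cderive_mult g h t a b : is_cderive g t a -> is_cderive h t b ->
  is_cderive (fun s => g s * h s)%C t (a * h t + g t * b)%C.
Proof.
  intros [A B] [C D]; split; simpl.
  - eapply is_derive_val.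
    + apply is_derive_R_minus; apply Derive.is_derive_mult; eauto.
    + unfold Re, Im; simpl; ring.
  - eapply is_derive_val.
    + apply is_derive_R_plus; apply Derive.is_derive_mult; eauto.
    + unfold Re, Im; simpl; ring.
Qed.

Lemma is_cderive_ext (g g' : R -> C) t l : (forall s, g s = g' s) ->
  is_cderive g t l -> is_cderive g' t l.
Proof. intros E [A B]; split; eapply is_derive_R_ext; eauto; intros; simpl; rewrite E; auto. Qed.

Lemma is_cderive_unique g t a b : is_cderive g t a -> is_cderive g t b -> a = b.
Proof.
  intros [A B] [C D]. apply is_derive_unique in A, B, C, D.
  destruct a, b; unfold Re, Im in *; simpl in *; congruence.
Qed.

(* The inverse is obtained from [/ z = conj z / |z|²]. *)
Lemma is_cderive_inv h t a : is_cderive h t a -> h t <> 0%C ->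
  is_cderive (fun s => / h s)%C t (- (a * (/ h t * / h t)))%C.
Proof.
  intros [A B] Hn. pose proof (Cmod2_neq0 _ Hn) as HD.
  destruct (h t) as [p q] eqn:Eh. unfold Re, Im in HD; simpl in HD.
  assert (DD : is_derive (fun s => fst (h s) ^ 2 + snd (h s) ^ 2) t
                 (2 * p * fst a + 2 * q * snd a)).
  { eapply is_derive_val.
    - apply (is_derive_R_ext (fun s => fst (h s) * fst (h s) + snd (h s) * snd (h s)));
        [intros; ring|].
      apply is_derive_R_plus; apply Derive.is_derive_mult; eauto.
    - simpl; rewrite Eh; unfold Re, Im; simpl; ring. }
  pose proof (is_derive_inv _ _ _ DD) as DI. cbv beta in DI. rewrite Eh in DI. specialize (DI HD).
  split.
  - eapply is_derive_val; [exact (Derive.is_derive_mult _ _ t _ _ A DI)|].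
    cbv beta; rewrite Eh; unfold Re, Im; simpl. field; intro Hc; apply HD; nra.
  - eapply is_derive_val; [exact (Derive.is_derive_mult _ _ t _ _ (is_derive_R_opp _ _ _ B) DI)|].
    cbv beta; rewrite Eh; unfold Re, Im; simpl. field; intro Hc; apply HD; nra.
Qed.

Lemma is_cderive_const_fun (g : R -> C) t l c : (forall s, g s = c) -> is_cderive g t l -> l = 0%C.
Proof.
  intros E D. apply (is_cderive_unique g t l 0%C D).
  apply (is_cderive_ext (fun _ => c)); [intros; rewrite E; auto|apply is_cderive_const].
Qed.

(** * C² functions with prescribed partial derivatives *)

Lemma upd_same (x : pt) j : upd x j (x j) = x.
Proof.
  apply functional_extensionality; intro i; unfold upd.
  destruct (Nat.eqb_spec i j); subst; auto.
Qed.

Definition C1_with m (W : pt -> Prop) (G : pt -> C) (G1 : nat -> pt -> C) :=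
  forall x, W x -> ccont m G x /\
    forall j, (j < m)%nat -> is_cderive (fun t => G (upd x j t)) (x j) (G1 j x) /\ ccont m (G1 j) x.

Definition C2_with m W G G1 (G2 : nat -> nat -> pt -> C) :=
  C1_with m W G G1 /\ forall j, (j < m)%nat -> C1_with m W (G1 j) (G2 j).

Lemma C1_with_const m W (c : C) : C1_with m W (fun _ => c) (fun _ _ => 0%C).
Proof.
  intros x _; split; [apply ccont_const|].
  intros; split; [apply is_cderive_const|apply ccont_const].
Qed.

Lemma C1_with_plus m W G G1 H H1 : C1_with m W G G1 -> C1_with m W H H1 ->
  C1_with m W (fun x => G x + H x)%C (fun j x => G1 j x + H1 j x)%C.
Proof.
  intros HG HH x Wx; destruct (HG x Wx) as [cG dG]; destruct (HH x Wx) as [cH dH].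
  split; [apply ccont_plus; auto|].
  intros j Hj; destruct (dG j Hj) as [a b]; destruct (dH j Hj) as [c d]; split.
  - apply (is_cderive_plus _ _ _ _ _ a c).
  - apply ccont_plus; auto.
Qed.

Lemma C1_with_opp m W G G1 : C1_with m W G G1 ->
  C1_with m W (fun x => - G x)%C (fun j x => - G1 j x)%C.
Proof.
  intros HG x Wx; destruct (HG x Wx) as [cG dG].
  split; [apply ccont_opp; auto|].
  intros j Hj; destruct (dG j Hj) as [a b]; split.
  - apply (is_cderive_opp _ _ _ a).
  - apply ccont_opp; auto.
Qed.

Lemma C1_with_mult m W G G1 H H1 : C1_with m W G G1 -> C1_with m W H H1 ->
  C1_with m W (fun x => G x * H x)%C (fun j x => G1 j x * H x + G x * H1 j x)%C.
Proof.
  intros HG HH x Wx; destruct (HG x Wx) as [cG dG]; destruct (HH x Wx) as [cH dH].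
  split; [apply ccont_mult; auto|].
  intros j Hj; destruct (dG j Hj) as [a b]; destruct (dH j Hj) as [c d]; split.
  - pose proof (is_cderive_mult _ _ _ _ _ a c) as K. cbv beta in K. rewrite upd_same in K. exact K.
  - apply ccont_plus; apply ccont_mult; auto.
Qed.

Lemma C1_with_inv m W H H1 : C1_with m W H H1 -> (forall x, W x -> H x <> 0%C) ->
  C1_with m W (fun x => / H x)%C (fun j x => - (H1 j x * (/ H x * / H x)))%C.
Proof.
  intros HH Hn x Wx; destruct (HH x Wx) as [cH dH].
  split; [apply ccont_inv; auto|].
  intros j Hj; destruct (dH j Hj) as [c d]; split.
  - pose proof (is_cderive_inv _ _ _ c) as K. cbv beta in K. rewrite upd_same in K. apply K; auto.
  - apply ccont_opp; apply ccont_mult; auto; apply ccont_mult; apply ccont_inv; auto.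
Qed.

Lemma C1_with_sub m (W W' : pt -> Prop) G G1 : (forall x, W' x -> W x) ->
  C1_with m W G G1 -> C1_with m W' G G1.
Proof. intros S H x Wx; apply H; auto. Qed.

Lemma C2_with_const m W (c : C) : C2_with m W (fun _ => c) (fun _ _ => 0%C) (fun _ _ _ => 0%C).
Proof. split; [|intros]; apply C1_with_const. Qed.

Lemma C2_with_plus m W G G1 G2 H H1 H2 : C2_with m W G G1 G2 -> C2_with m W H H1 H2 ->
  C2_with m W (fun x => G x + H x)%C (fun j x => G1 j x + H1 j x)%C
    (fun j k x => G2 j k x + H2 j k x)%C.
Proof.
  intros [DG DG2] [DH DH2]; split; [apply C1_with_plus; auto|].
  intros j Hj; apply C1_with_plus; auto.
Qed.

Lemma C2_with_mult m W G G1 G2 H H1 H2 : C2_with m W G G1 G2 -> C2_with m W H H1 H2 ->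
  C2_with m W (fun x => G x * H x)%C (fun j x => G1 j x * H x + G x * H1 j x)%C
    (fun j k x => (G2 j k x * H x + G1 j x * H1 k x) + (G1 k x * H1 j x + G x * H2 j k x))%C.
Proof.
  intros [DG DG2] [DH DH2]; split; [apply C1_with_mult; auto|].
  intros j Hj; apply C1_with_plus; apply C1_with_mult; auto.
Qed.

Lemma C2_with_sub m (W W' : pt -> Prop) G G1 G2 : (forall x, W' x -> W x) ->
  C2_with m W G G1 G2 -> C2_with m W' G G1 G2.
Proof.
  intros S [D DD]; split; [apply (C1_with_sub _ W); auto|].
  intros j Hj; apply (C1_with_sub _ W); auto.
Qed.

Lemma csum_ext m f g : (forall k, (k < m)%nat -> f k = g k) -> csum m f = csum m g.
Proof. induction m; simpl; intros; auto. rewrite IHm, H; auto. Qed.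

Lemma csum_zero m : csum m (fun _ => 0%C) = 0%C.
Proof. induction m; simpl; auto. rewrite IHm. apply Cplus_0_r. Qed.

Lemma csum_plus m f g : csum m (fun k => f k + g k)%C = (csum m f + csum m g)%C.
Proof. induction m; simpl. - rewrite Cplus_0_r; auto. - rewrite IHm. ring. Qed.

Lemma csum_scal m c f : csum m (fun k => c * f k)%C = (c * csum m f)%C.
Proof. induction m; simpl. - ring. - rewrite IHm. ring. Qed.

Lemma csum_mult_r m f c : (csum m f * c)%C = csum m (fun k => f k * c)%C.
Proof. induction m; simpl. - ring. - rewrite <- IHm. ring. Qed.

Lemma csum_lin2 m c1 c2 f1 f2 :
  csum m (fun k => c1 * f1 k + c2 * f2 k)%C = (c1 * csum m f1 + c2 * csum m f2)%C.
Proof. rewrite csum_plus, !csum_scal; auto. Qed.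

Lemma csum_lin3 m c1 c2 c3 f1 f2 f3 :
  csum m (fun k => c1 * f1 k + c2 * f2 k + c3 * f3 k)%C =
  (c1 * csum m f1 + c2 * csum m f2 + c3 * csum m f3)%C.
Proof. rewrite !csum_plus, !csum_scal; auto. Qed.

Lemma csum_swap A B (f : nat -> nat -> C) :
  csum A (fun k => csum B (fun i => f k i)) = csum B (fun i => csum A (fun k => f k i)).
Proof. induction A; simpl. - rewrite csum_zero; auto. - rewrite IHA, <- csum_plus; auto. Qed.

Lemma csum_trunc m p (f : nat -> C) : (p <= m)%nat ->
  (forall k, (p <= k)%nat -> (k < m)%nat -> f k = 0%C) -> csum m f = csum p f.
Proof.
  induction m; intros Hm H.
  - replace p with 0%nat by lia; reflexivity.
  - destruct (Nat.eq_dec p (S m)) as [->|Hp]; [reflexivity|].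
    simpl. rewrite IHm, H; try lia; [apply Cplus_0_r|].
    intros; apply H; lia.
Qed.

Lemma csum_indicator n i (f : nat -> C) :
  csum n (fun l => ((if Nat.eqb l i then RtoC 1 else RtoC 0) * f l)%C) =
  if Nat.ltb i n then f i else 0%C.
Proof.
  induction n; simpl; auto. rewrite IHn.
  destruct (Nat.eqb_spec n i), (Nat.ltb_spec i n), (Nat.ltb_spec i (S n)); try lia; subst; ring.
Qed.

Lemma rsum_ext m f g : (forall k, (k < m)%nat -> f k = g k) -> rsum m f = rsum m g.
Proof. induction m; simpl; intros; auto. rewrite IHm, H; auto. Qed.

Lemma rsum_plus m f g : rsum m (fun k => f k + g k) = rsum m f + rsum m g.
Proof. induction m; simpl. - ring. - rewrite IHm. ring. Qed.

Lemma rsum_minus m f g : rsum m (fun k => f k - g k) = rsum m f - rsum m g.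
Proof. induction m; simpl. - ring. - rewrite IHm. ring. Qed.

Lemma rsum_scal m c f : rsum m (fun k => c * f k) = c * rsum m f.
Proof. induction m; simpl. - ring. - rewrite IHm. ring. Qed.

Lemma Re_csum m f : Re (csum m f) = rsum m (fun k => Re (f k)).
Proof. induction m; simpl; auto. rewrite <- IHm; auto. Qed.

Lemma Im_csum m f : Im (csum m f) = rsum m (fun k => Im (f k)).
Proof. induction m; simpl; auto. rewrite <- IHm; auto. Qed.

(** * Harmonic functions with gradients in a totally isotropic subspace *)

Definition totally_isotropic_on m (W : pt -> Prop) (S : pt -> (nat -> C) -> Prop) :=
  forall x, W x ->
    S x (fun _ => 0%C) /\
    (forall v w a b, S x v -> S x w -> S x (fun k => a * v k + b * w k)%C) /\
    (forall v w, S x v -> S x w -> csum m (fun k => v k * w k)%C = 0%C).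

Definition isotropic_harmonic m W S G := exists G1 G2, C2_with m W G G1 G2 /\
  forall x, W x -> S x (fun k => G1 k x) /\ csum m (fun k => G2 k k x) = 0%C.

Section IsotropicHarmonic.

Variables (m : nat) (W : pt -> Prop) (S : pt -> (nat -> C) -> Prop).
Hypothesis HS : totally_isotropic_on m W S.

Lemma isotropic_lin x v w a b v' : W x -> S x v -> S x w ->
  (forall k, v' k = a * v k + b * w k)%C -> S x v'.
Proof.
  intros Wx Hv Hw E. replace v' with (fun k => a * v k + b * w k)%C.
  - apply (HS x Wx); auto.
  - apply functional_extensionality; intros; rewrite E; auto.
Qed.

Lemma isotropic_harmonic_ext G G' : (forall x, G x = G' x) ->
  isotropic_harmonic m W S G -> isotropic_harmonic m W S G'.
Proof. intros E; replace G' with G; auto. apply functional_extensionality; auto. Qed.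

Lemma isotropic_harmonic_const (c : C) : isotropic_harmonic m W S (fun _ => c).
Proof.
  exists (fun _ _ => 0%C), (fun _ _ _ => 0%C); split; [apply C2_with_const|].
  intros x Wx; split; [apply (HS x Wx)|apply csum_zero].
Qed.

Lemma isotropic_harmonic_plus G H : isotropic_harmonic m W S G -> isotropic_harmonic m W S H ->
  isotropic_harmonic m W S (fun x => G x + H x)%C.
Proof.
  intros [G1 [G2 [CG TG]]] [H1 [H2 [CH TH]]].
  eexists _, _; split; [apply (C2_with_plus _ _ _ _ _ _ _ _ CG CH)|].
  intros x Wx; destruct (TG x Wx) as [iG tG]; destruct (TH x Wx) as [iH tH]; split.
  - apply (isotropic_lin x _ _ (RtoC 1) (RtoC 1) _ Wx iG iH). intros; simpl; ring.
  - rewrite csum_plus, tG, tH; ring.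
Qed.

(* Isotropy kills the cross term [2 Σ_k ∂_kG ∂_kH] of [Δ(GH)]. *)
Lemma isotropic_harmonic_mult G H : isotropic_harmonic m W S G -> isotropic_harmonic m W S H ->
  isotropic_harmonic m W S (fun x => G x * H x)%C.
Proof.
  intros [G1 [G2 [CG TG]]] [H1 [H2 [CH TH]]].
  eexists _, _; split; [apply (C2_with_mult _ _ _ _ _ _ _ _ CG CH)|].
  intros x Wx; destruct (TG x Wx) as [iG tG]; destruct (TH x Wx) as [iH tH]; split.
  - apply (isotropic_lin x _ _ (H x) (G x) _ Wx iG iH). intros; simpl; ring.
  - destruct (HS x Wx) as [_ [_ P]].
    rewrite (csum_ext _ _ (fun k => H x * G2 k k x + G x * H2 k k x + 2 * (G1 k x * H1 k x))%C)
      by (intros; ring).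
    rewrite csum_lin3, tG, tH, (P _ _ iG iH). ring.
Qed.

Lemma isotropic_harmonic_inv H : isotropic_harmonic m W S H -> (forall x, W x -> H x <> 0%C) ->
  isotropic_harmonic m W S (fun x => / H x)%C.
Proof.
  intros [H1 [H2 [[DH DH2] TH]]] Hn.
  exists (fun j x => - (H1 j x * (/ H x * / H x)))%C,
    (fun j k x => - (H2 j k x * (/ H x * / H x) +
        H1 j x * (- (H1 k x * (/ H x * / H x)) * / H x + / H x * - (H1 k x * (/ H x * / H x)))))%C.
  split; [split; [apply C1_with_inv; auto|]|].
  - intros j Hj. apply C1_with_opp, C1_with_mult; auto.
    apply C1_with_mult; apply C1_with_inv; auto.
  - intros x Wx; destruct (TH x Wx) as [iH tH]; cbv beta; split.
    + apply (isotropic_lin x _ _ (- (/ H x * / H x))%C (RtoC 0) _ Wx iH iH). intros; simpl; ring.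
    + destruct (HS x Wx) as [_ [_ P]].
      rewrite (csum_ext _ _ (fun k => (- (/ H x * / H x)) * H2 k k x
          + (2 * (/ H x * / H x * / H x)) * (H1 k x * H1 k x))%C) by (intros; ring).
      rewrite csum_lin2, tH, (P _ _ iH iH). ring.
Qed.

Lemma isotropic_harmonic_cpow G k : isotropic_harmonic m W S G ->
  isotropic_harmonic m W S (fun x => cpow (G x) k).
Proof.
  intros HG; induction k; simpl.
  - apply isotropic_harmonic_const.
  - apply isotropic_harmonic_mult; auto.
Qed.

End IsotropicHarmonic.

(** * The principal square root *)

Definition slit (w : C) := 0 < Re w \/ Im w <> 0.

Lemma sqrt_pos_inv z : 0 < sqrt z -> 0 < z.
Proof. intros H. destruct (Rlt_le_dec 0 z); auto. rewrite sqrt_neg_0 in H; lra. Qed.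

Lemma Cmod_bounds a b : let r := sqrt (a ^ 2 + b ^ 2) in
  0 <= r /\ r * r = a ^ 2 + b ^ 2 /\ - r <= a <= r.
Proof.
  intros r. assert (0 <= r) by apply sqrt_pos.
  assert (r * r = a ^ 2 + b ^ 2) by (apply sqrt_sqrt; nra). nra.
Qed.

Lemma csqrt_sq w : (csqrt w * csqrt w)%C = w.
Proof.
  destruct w as [a b]. unfold csqrt, Cmod, Re, Im. simpl fst; simpl snd.
  destruct (Cmod_bounds a b) as [r0 [rr ra]]. set (r := sqrt (a ^ 2 + b ^ 2)) in *.
  assert (Ha : sqrt ((r + a) / 2) * sqrt ((r + a) / 2) = (r + a) / 2) by (apply sqrt_sqrt; lra).
  assert (Hb : sqrt ((r - a) / 2) * sqrt ((r - a) / 2) = (r - a) / 2) by (apply sqrt_sqrt; lra).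
  assert (Hab : sqrt ((r + a) / 2) * sqrt ((r - a) / 2) = Rabs b / 2).
  { rewrite <- sqrt_mult by lra.
    replace ((r + a) / 2 * ((r - a) / 2)) with ((Rabs b / 2) ^ 2)
      by (rewrite <- (pow2_abs b) in rr; unfold Rdiv; nra).
    apply sqrt_pow2. apply Rmult_le_pos; [apply Rabs_pos|lra]. }
  unfold Cmult; simpl fst; simpl snd. f_equal.
  - destruct (Rlt_dec b 0); nra.
  - destruct (Rlt_dec b 0).
    + rewrite Rabs_left in Hab by auto. nra.
    + rewrite Rabs_right in Hab by lra. nra.
Qed.

Lemma csqrt_re_pos w : slit w -> 0 < Re (csqrt w).
Proof.
  destruct w as [a b]; unfold slit, csqrt, Cmod, Re, Im; cbn [fst snd]. intros Hs.
  destruct (Cmod_bounds a b) as [r0 [rr ra]]. set (r := sqrt (a ^ 2 + b ^ 2)) in *.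
  apply sqrt_lt_R0. destruct Hs as [Hs|Hs]; [lra|].
  assert (0 < b * b) by (apply (Rsqr_pos_lt b); auto).
  destruct (Rle_dec (r + a) 0); nra.
Qed.

Lemma csqrt_im w : Im (csqrt w) * (2 * Re (csqrt w)) = Im w.
Proof.
  pose proof (csqrt_sq w) as E. apply (f_equal Im) in E. rewrite <- E.
  unfold Cmult, Re, Im; simpl. ring.
Qed.

Lemma csqrt_double_neq0 w : slit w -> (RtoC 2 * csqrt w)%C <> 0%C.
Proof.
  intros Hs E. apply (f_equal Re) in E. pose proof (csqrt_re_pos _ Hs).
  unfold Cmult, Re, RtoC in *; simpl in *. lra.
Qed.

Lemma is_derive_pos_locally (f : R -> R) t l : is_derive f t l -> 0 < f t ->
  locally t (fun s => 0 < f s).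
Proof.
  intros D P. assert (Cf : continuity_pt f t).
  { apply continuity_pt_filterlim. apply (ex_derive_continuous f). exists l; auto. }
  apply continuity_pt_locally with (eps := mkposreal _ P) in Cf.
  eapply filter_imp; [|exact Cf]. intros s Hs; simpl in Hs; apply Rabs_def2 in Hs; lra.
Qed.

Section CsqrtDerivative.

Variables (h : R -> C) (t : R) (l : C).
Hypotheses (Dh : is_cderive h t l) (Sh : slit (h t)).

Lemma ex_derive_Re_csqrt : exists LR, is_derive (fun s => Re (csqrt (h s))) t LR.
Proof.
  destruct Dh as [A B].
  assert (Hw : 0 < fst (h t) ^ 2 + snd (h t) ^ 2).
  { destruct Sh as [Hs|Hs]; unfold Re, Im in Hs;
      [|assert (0 < snd (h t) * snd (h t)) by (apply (Rsqr_pos_lt (snd (h t))); auto)]; nra. }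
  pose proof (is_derive_R_plus _ _ t _ _ (Derive.is_derive_mult _ _ t _ _ A A)
                (Derive.is_derive_mult _ _ t _ _ B B)) as Dsq.
  apply (is_derive_R_ext _ (fun s => fst (h s) ^ 2 + snd (h s) ^ 2)) in Dsq;
    [|intros; unfold Re, Im; ring].
  pose proof (is_derive_sqrt _ _ _ Dsq Hw) as Dmod.
  pose proof (Derive.is_derive_mult _ _ t _ _ (is_derive_R_plus _ _ t _ _ Dmod A)
                (is_derive_R_const (/ 2) t)) as Dhalf.
  assert (Hp : 0 < (sqrt (fst (h t) ^ 2 + snd (h t) ^ 2) + Re (h t)) * / 2).
  { pose proof (csqrt_re_pos _ Sh) as P. unfold csqrt in P; simpl in P.
    apply sqrt_pos_inv in P. exact P. }
  eexists. exact (is_derive_sqrt _ _ _ Dhalf Hp).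
Qed.

(* Away from the cut, [Im (csqrt w) = Im w / (2 Re (csqrt w))]. *)
Lemma ex_cderive_csqrt : exists L, is_cderive (fun s => csqrt (h s)) t L.
Proof.
  destruct ex_derive_Re_csqrt as [LR DR]. destruct Dh as [_ B].
  assert (Hp := csqrt_re_pos _ Sh).
  assert (H2p : 2 * Re (csqrt (h t)) <> 0) by lra.
  pose proof (Derive.is_derive_mult _ _ t _ _ B
     (is_derive_inv _ _ _ (Derive.is_derive_mult _ _ t _ _ (is_derive_R_const 2 t) DR) H2p)) as DI.
  eexists (LR, _). split; [exact DR|].
  eapply is_derive_ext_loc; [|exact DI].
  eapply filter_imp; [|exact (is_derive_pos_locally _ _ _ DR Hp)]. intros s Ps; simpl in Ps.
  match goal with |- @eq _ ?A ?B => change (@eq R A B) end.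
  rewrite <- (csqrt_im (h s)). field.
  change (Re (csqrt (h s))) with (sqrt ((Cmod (h s) + Re (h s)) / 2)). lra.
Qed.

(* Differentiating [csqrt (h s)² = h s] determines the derivative. *)
Lemma is_cderive_csqrt : is_cderive (fun s => csqrt (h s)) t (l * / (RtoC 2 * csqrt (h t)))%C.
Proof.
  destruct ex_cderive_csqrt as [L DL].
  pose proof (is_cderive_mult _ _ _ _ _ DL DL) as DLL.
  apply (is_cderive_ext _ h) in DLL; [|intros; apply csqrt_sq].
  replace (l * / (RtoC 2 * csqrt (h t)))%C with L; [exact DL|].
  rewrite <- (is_cderive_unique _ _ _ _ DLL Dh). field.
  pose proof (csqrt_double_neq0 _ Sh) as N. intro E; apply N; rewrite E; ring.
Qed.

End CsqrtDerivative.

Lemma ccont_csqrt m H x : ccont m H x -> slit (H x) -> ccont m (fun y => csqrt (H y)) x.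
Proof.
  intros [A B] Hs.
  assert (CM : cont_at_m m (fun y => Cmod (H y)) x).
  { apply (cont_comp m sqrt (fun y => fst (H y) ^ 2 + snd (H y) ^ 2)).
    - apply continuity_pt_sqrt. nra.
    - apply cont_plus; apply cont_sq; auto. }
  assert (Hp := csqrt_re_pos _ Hs).
  assert (CR : cont_at_m m (fun y => Re (csqrt (H y))) x).
  { apply (cont_comp m sqrt (fun y => (Cmod (H y) + Re (H y)) / 2)).
    - apply continuity_pt_sqrt. apply sqrt_pos_inv in Hp. unfold Rdiv in *; lra.
    - apply cont_mult; [apply cont_plus; auto|apply cont_const]. }
  split; auto.
  destruct (CR _ Hp) as [d [Hd K]].
  apply (cont_ext_loc m (fun y => Im (H y) * / (2 * Re (csqrt (H y)))) _ x d Hd).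
  - intros y Hy. specialize (K y Hy). apply Rabs_def2 in K.
    rewrite <- (csqrt_im (H y)). field. lra.
  - apply cont_mult; auto. apply cont_inv; [apply cont_mult; auto; apply cont_const|lra].
Qed.

Lemma C1_with_csqrt m W H H1 : C1_with m W H H1 -> (forall x, W x -> slit (H x)) ->
  C1_with m W (fun x => csqrt (H x)) (fun j x => H1 j x * / (RtoC 2 * csqrt (H x)))%C.
Proof.
  intros HH Hs x Wx; destruct (HH x Wx) as [cH dH].
  split; [apply ccont_csqrt; auto|].
  intros j Hj; destruct (dH j Hj) as [c d]; split.
  - pose proof (is_cderive_csqrt _ _ _ c) as K. cbv beta in K. rewrite upd_same in K. apply K; auto.
  - apply ccont_mult; auto. apply ccont_inv; [|apply csqrt_double_neq0; auto].
    apply ccont_mult; [apply ccont_const|apply ccont_csqrt; auto].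
Qed.

Lemma isotropic_harmonic_csqrt m W S H : totally_isotropic_on m W S ->
  isotropic_harmonic m W S H -> (forall x, W x -> slit (H x)) ->
  isotropic_harmonic m W S (fun x => csqrt (H x)).
Proof.
  intros HS [H1 [H2 [[DH DH2] TH]]] Hs.
  set (R := fun x => csqrt (H x)).
  set (R1 := fun j x => (H1 j x * / (RtoC 2 * R x))%C).
  assert (DR : C1_with m W R R1) by (apply C1_with_csqrt; auto).
  assert (DI : C1_with m W (fun x => / (RtoC 2 * R x))%C
     (fun k x => - ((0 * R x + RtoC 2 * R1 k x) * (/ (RtoC 2 * R x) * / (RtoC 2 * R x))))%C).
  { apply C1_with_inv; [apply C1_with_mult; auto; apply C1_with_const|].
    intros; apply csqrt_double_neq0; auto. }
  exists R1, (fun j k x => H2 j k x * / (RtoC 2 * R x) +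
     H1 j x * (- ((0 * R x + RtoC 2 * R1 k x) * (/ (RtoC 2 * R x) * / (RtoC 2 * R x)))))%C.
  split; [split; [exact DR|intros j Hj; apply C1_with_mult; auto]|].
  intros x Wx; destruct (TH x Wx) as [iH tH].
  assert (iR : S x (fun k => R1 k x)).
  { apply (isotropic_lin m W S HS x _ _ (/ (RtoC 2 * R x))%C (RtoC 0) _ Wx iH iH).
    intros; unfold R1; ring. }
  split; auto.
  destruct (HS x Wx) as [_ [_ P]].
  rewrite (csum_ext _ _ (fun k => (/ (RtoC 2 * R x)) * H2 k k x
        + (- (RtoC 2 * (/ (RtoC 2 * R x)) * (/ (RtoC 2 * R x)))) * (H1 k x * R1 k x))%C)
    by (intros; ring).
  rewrite csum_lin2, tH, (P _ _ iH iR). ring.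
Qed.

(** * Composition with C² functions of two variables *)

Lemma differentiable_of_partials (g gu gv : R -> R -> R) u0 v0 :
  locally_2d (fun u v => is_derive (fun z => g z v) u (gu u v) /\
                         is_derive (fun z => g u z) v (gv u v)) u0 v0 ->
  continuity_2d_pt gu u0 v0 -> continuity_2d_pt gv u0 v0 ->
  differentiable_pt_lim g u0 v0 (gu u0 v0) (gv u0 v0).
Proof.
  intros [e He] Cu Cv eps.
  assert (Pe : 0 < eps / 2) by (destruct eps; simpl; lra).
  destruct (Cu (mkposreal _ Pe)) as [d1 Hd1]; destruct (Cv (mkposreal _ Pe)) as [d2 Hd2].
  assert (Pd : 0 < Rmin e (Rmin d1 d2))
    by (destruct e, d1, d2; simpl; repeat apply Rmin_pos; auto).
  exists (mkposreal _ Pd); simpl; intros u v Hu Hv.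
  pose proof (Rmin_l e (Rmin d1 d2)); pose proof (Rmin_r e (Rmin d1 d2)).
  pose proof (Rmin_l d1 d2); pose proof (Rmin_r d1 d2).
  (* mean value theorem along [u] at height [v], then along [v] at [u0] *)
  destruct (MVT_cor4 (fun z => g z v) (fun z => gu z v) u0 (Rabs (u - u0))) with (b := u)
    as [c [Ec Hc]]; [intros c Hc; apply (He c v); lra|lra|].
  destruct (MVT_cor4 (fun z => g u0 z) (fun z => gv u0 z) v0 (Rabs (v - v0))) with (b := v)
    as [c' [Ec' Hc']]; [intros c' Hc'; apply (He u0 c'); rewrite ?Rminus_eq_0, ?Rabs_R0;
                        destruct e; simpl in *; lra|lra|].
  replace (g u v - g u0 v0 - (gu u0 v0 * (u - u0) + gv u0 v0 * (v - v0)))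
    with ((gu c v - gu u0 v0) * (u - u0) + (gv u0 c' - gv u0 v0) * (v - v0)) by lra.
  assert (K1 : Rabs (gu c v - gu u0 v0) < eps / 2) by (apply Hd1; lra).
  assert (K2 : Rabs (gv u0 c' - gv u0 v0) < eps / 2).
  { apply Hd2; [rewrite Rminus_eq_0, Rabs_R0; destruct d2; simpl in *; lra|lra]. }
  eapply Rle_trans; [apply Rabs_triang|]. rewrite !Rabs_mult.
  pose proof (Rmax_l (Rabs (u - u0)) (Rabs (v - v0))).
  pose proof (Rmax_r (Rabs (u - u0)) (Rabs (v - v0))).
  pose proof (Rabs_pos (u - u0)); pose proof (Rabs_pos (v - v0)).
  pose proof (Rabs_pos (gu c v - gu u0 v0)); pose proof (Rabs_pos (gv u0 c' - gv u0 v0)).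
  nra.
Qed.

Definition du (g : R -> R -> R) u v := Derive (fun z => g z v) u.
Definition dv (g : R -> R -> R) u v := Derive (fun z => g u z) v.

Definition pt2 (u v : R) : pt := fun i => if Nat.eqb i 0 then u else v.

Definition C2_at (g : R -> R -> R) u v :=
  ex_derive (fun z => g z v) u /\ ex_derive (fun z => g u z) v /\
  ex_derive (fun z => du g z v) u /\ ex_derive (fun z => du g u z) v /\
  ex_derive (fun z => dv g z v) u /\ ex_derive (fun z => dv g u z) v /\
  continuity_2d_pt g u v /\ continuity_2d_pt (du g) u v /\ continuity_2d_pt (dv g) u v /\
  continuity_2d_pt (du (du g)) u v /\ continuity_2d_pt (dv (du g)) u v /\
  continuity_2d_pt (du (dv g)) u v /\ continuity_2d_pt (dv (dv g)) u v.

Lemma continuity_2d_pt_of_cont_at_m (H : pt -> R) u0 v0 : cont_at_m 2 H (pt2 u0 v0) ->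
  continuity_2d_pt (fun u v => H (pt2 u v)) u0 v0.
Proof.
  intros C eps. destruct (C eps (cond_pos eps)) as [d [Hd K]].
  exists (mkposreal d Hd); simpl; intros u v Hu Hv. apply K.
  intros k Hk. destruct k as [|[|k]]; simpl; auto; lia.
Qed.

Lemma C2_at_of_C2_on (V : R -> R -> Prop) (g : R -> R -> R) :
  C2_on 2 (fun y => V (y 0%nat) (y 1%nat)) (fun y => g (y 0%nat) (y 1%nat)) ->
  forall u v, V u v -> C2_at g u v.
Proof.
  intros HC u v Hv. destruct (HC (pt2 u v) Hv) as [C0 HJ].
  destruct (HJ 0%nat ltac:(lia)) as [E0 [C1 HK0]].
  destruct (HJ 1%nat ltac:(lia)) as [E1 [C2 HK1]].
  destruct (HK0 0%nat ltac:(lia)) as [E00 C00].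
  destruct (HK0 1%nat ltac:(lia)) as [E01 C01].
  destruct (HK1 0%nat ltac:(lia)) as [E10 C10].
  destruct (HK1 1%nat ltac:(lia)) as [E11 C11].
  repeat split; try assumption;
    match goal with H : cont_at_m 2 _ _ |- _ => exact (continuity_2d_pt_of_cont_at_m _ _ _ H) end.
Qed.

Lemma C2_at_locally (V : R -> R -> Prop) (g : R -> R -> R) u0 v0 :
  open_m 2 (fun y => V (y 0%nat) (y 1%nat)) ->
  C2_on 2 (fun y => V (y 0%nat) (y 1%nat)) (fun y => g (y 0%nat) (y 1%nat)) ->
  V u0 v0 -> locally_2d (C2_at g) u0 v0.
Proof.
  intros Ho HC Hv. destruct (Ho (pt2 u0 v0) Hv) as [e [He K]].
  exists (mkposreal e He). intros u v Hu Hv'. apply (C2_at_of_C2_on V g HC).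
  apply (K (pt2 u v)). intros k Hk. destruct k as [|[|k]]; [exact Hu|exact Hv'|lia].
Qed.

Lemma differentiable_of_ex_derive (h : R -> R -> R) u0 v0 :
  locally_2d (fun u v => ex_derive (fun z => h z v) u /\ ex_derive (fun z => h u z) v) u0 v0 ->
  continuity_2d_pt (du h) u0 v0 -> continuity_2d_pt (dv h) u0 v0 ->
  differentiable_pt_lim h u0 v0 (du h u0 v0) (dv h u0 v0).
Proof.
  intros L C1 C2. apply differentiable_of_partials; auto.
  eapply locally_2d_impl; [|exact L]. apply locally_2d_forall.
  intros u v [A B]; split; apply Derive_correct; auto.
Qed.

Lemma C2_at_differentiable g u0 v0 : locally_2d (C2_at g) u0 v0 ->
  differentiable_pt_lim g u0 v0 (du g u0 v0) (dv g u0 v0) /\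
  differentiable_pt_lim (du g) u0 v0 (du (du g) u0 v0) (dv (du g) u0 v0) /\
  differentiable_pt_lim (dv g) u0 v0 (du (dv g) u0 v0) (dv (dv g) u0 v0).
Proof.
  intros L. pose proof (locally_2d_singleton _ _ _ L) as P.
  destruct P as [_ [_ [_ [_ [_ [_ [_ [c1 [c2 [c3 [c4 [c5 c6]]]]]]]]]]]].
  repeat split; apply differentiable_of_ex_derive; auto;
    (eapply locally_2d_impl; [|exact L]); apply locally_2d_forall; intros u v P; unfold C2_at in P; tauto.
Qed.

Lemma is_derive_comp_2d (h : R -> R -> R) (p1 p2 : R -> R) t0 hu hv a b :
  differentiable_pt_lim h (p1 t0) (p2 t0) hu hv -> is_derive p1 t0 a -> is_derive p2 t0 b ->
  is_derive (fun t => h (p1 t) (p2 t)) t0 (hu * a + hv * b).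
Proof.
  intros D A B. apply is_derive_Reals. apply is_derive_Reals in A, B.
  apply derivable_pt_lim_comp_2d; auto.
Qed.

Lemma open_m_line m W x k : open_m m W -> W x -> (k < m)%nat ->
  locally (x k) (fun t => W (upd x k t)).
Proof.
  intros Ho Wx Hk. destruct (Ho x Wx) as [e [He K]].
  exists (mkposreal e He); intros t Ht. apply K. intros i Hi. unfold upd.
  destruct (Nat.eqb_spec i k); [subst; exact Ht|]. rewrite Rminus_eq_0, Rabs_R0; auto.
Qed.

Definition C1_real_with m (W : pt -> Prop) (f : pt -> R) (a : nat -> pt -> R) :=
  forall x, W x -> cont_at_m m f x /\
    forall j, (j < m)%nat -> is_derive (fun t => f (upd x j t)) (x j) (a j x) /\ cont_at_m m (a j) x.

Lemma C1_real_with_of_C1_with m W G G1 : C1_with m W G G1 ->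
  C1_real_with m W (fun x => Re (G x)) (fun j x => Re (G1 j x)) /\
  C1_real_with m W (fun x => Im (G x)) (fun j x => Im (G1 j x)).
Proof.
  intros D; split; intros x Wx; destruct (D x Wx) as [[c1 c2] K]; split; auto;
    intros j Hj; destruct (K j Hj) as [[d1 d2] [e1 e2]]; split; auto.
Qed.

Section ChainRule.

Variables (m : nat) (W : pt -> Prop) (g : R -> R -> R) (p1 p2 : pt -> R).
Variables (a b : nat -> pt -> R) (a2 b2 : nat -> nat -> pt -> R).
Hypotheses (Ho : open_m m W) (R1 : C1_real_with m W p1 a) (R2 : C1_real_with m W p2 b).
Hypotheses (RA : forall j, (j < m)%nat -> C1_real_with m W (a j) (a2 j))
           (RB : forall j, (j < m)%nat -> C1_real_with m W (b j) (b2 j)).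
Hypothesis Lg : forall x, W x -> locally_2d (C2_at g) (p1 x) (p2 x).

Let F x := g (p1 x) (p2 x).

Definition dcomp j x := du g (p1 x) (p2 x) * a j x + dv g (p1 x) (p2 x) * b j x.

Definition d2comp j k x :=
  (du (du g) (p1 x) (p2 x) * a k x + dv (du g) (p1 x) (p2 x) * b k x) * a j x
  + du g (p1 x) (p2 x) * a2 j k x
  + ((du (dv g) (p1 x) (p2 x) * a k x + dv (dv g) (p1 x) (p2 x) * b k x) * b j x
  + dv g (p1 x) (p2 x) * b2 j k x).

Lemma is_derive_comp_line x j : W x -> (j < m)%nat ->
  is_derive (fun t => F (upd x j t)) (x j) (dcomp j x).
Proof.
  intros Wx Hj. destruct (C2_at_differentiable _ _ _ (Lg x Wx)) as [Dg _].
  destruct (proj2 (R1 x Wx) j Hj) as [d1 _]; destruct (proj2 (R2 x Wx) j Hj) as [d2 _].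
  apply (is_derive_comp_2d g (fun t => p1 (upd x j t)) (fun t => p2 (upd x j t))); auto.
  cbv beta; rewrite upd_same; exact Dg.
Qed.

Lemma partial_comp x j : W x -> (j < m)%nat -> partial j F x = dcomp j x.
Proof. intros; unfold partial; apply is_derive_unique, is_derive_comp_line; auto. Qed.

Lemma is_derive_dcomp_line x j k : W x -> (j < m)%nat -> (k < m)%nat ->
  is_derive (fun t => dcomp j (upd x k t)) (x k) (d2comp j k x).
Proof.
  intros Wx Hj Hk. destruct (C2_at_differentiable _ _ _ (Lg x Wx)) as [_ [Du Dv]].
  destruct (proj2 (R1 x Wx) k Hk) as [d1 _]; destruct (proj2 (R2 x Wx) k Hk) as [d2 _].
  destruct (proj2 (RA j Hj x Wx) k Hk) as [da _]; destruct (proj2 (RB j Hj x Wx) k Hk) as [db _].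
  pose proof (is_derive_comp_2d (du g) (fun t => p1 (upd x k t)) (fun t => p2 (upd x k t)) (x k)
                _ _ _ _ ltac:(cbv beta; rewrite upd_same; exact Du) d1 d2) as Cu.
  pose proof (is_derive_comp_2d (dv g) (fun t => p1 (upd x k t)) (fun t => p2 (upd x k t)) (x k)
                _ _ _ _ ltac:(cbv beta; rewrite upd_same; exact Dv) d1 d2) as Cv.
  eapply is_derive_val.
  - exact (is_derive_R_plus _ _ _ _ _ (Derive.is_derive_mult _ _ _ _ _ Cu da)
                                       (Derive.is_derive_mult _ _ _ _ _ Cv db)).
  - cbv beta; rewrite !upd_same. unfold d2comp. ring.
Qed.

Lemma partial2_comp x j k : W x -> (j < m)%nat -> (k < m)%nat ->
  partial k (partial j F) x = d2comp j k x.
Proof.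
  intros Wx Hj Hk. unfold partial at 1. apply is_derive_unique.
  eapply is_derive_ext_loc; [|exact (is_derive_dcomp_line x j k Wx Hj Hk)].
  eapply filter_imp; [|exact (open_m_line m W x k Ho Wx Hk)].
  intros t Wt; simpl. rewrite partial_comp; auto.
Qed.

Lemma cont_comp_at x : W x -> cont_at_m m F x.
Proof.
  intros Wx. pose proof (locally_2d_singleton _ _ _ (Lg x Wx)) as [_ [_ [_ [_ [_ [_ [Cg _]]]]]]].
  apply cont_comp_2d; auto; [apply (R1 x Wx)|apply (R2 x Wx)].
Qed.

Lemma cont_dcomp x j : W x -> (j < m)%nat -> cont_at_m m (dcomp j) x.
Proof.
  intros Wx Hj.
  pose proof (locally_2d_singleton _ _ _ (Lg x Wx)) as [_ [_ [_ [_ [_ [_ [_ [Cu [Cv _]]]]]]]]].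
  destruct (R1 x Wx) as [c1 K1]; destruct (K1 j Hj) as [_ ca].
  destruct (R2 x Wx) as [c2 K2]; destruct (K2 j Hj) as [_ cb].
  unfold dcomp. apply cont_plus; apply cont_mult; auto; apply cont_comp_2d; auto.
Qed.

Lemma cont_d2comp x j k : W x -> (j < m)%nat -> (k < m)%nat -> cont_at_m m (d2comp j k) x.
Proof.
  intros Wx Hj Hk. pose proof (locally_2d_singleton _ _ _ (Lg x Wx))
    as [_ [_ [_ [_ [_ [_ [_ [Cu [Cv [Cuu [Cuv [Cvu Cvv]]]]]]]]]]]].
  destruct (R1 x Wx) as [c1 K1]; destruct (K1 j Hj) as [_ caj]; destruct (K1 k Hk) as [_ cak].
  destruct (R2 x Wx) as [c2 K2]; destruct (K2 j Hj) as [_ cbj]; destruct (K2 k Hk) as [_ cbk].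
  destruct (proj2 (RA j Hj x Wx) k Hk) as [_ ca2]; destruct (proj2 (RB j Hj x Wx) k Hk) as [_ cb2].
  unfold d2comp. repeat first [apply cont_plus | apply cont_mult]; auto; apply cont_comp_2d; auto.
Qed.

Lemma C2_on_comp : C2_on m W F.
Proof.
  intros x Wx. split; [apply cont_comp_at; auto|].
  intros j Hj. destruct (Ho x Wx) as [e [He K]]. split; [|split].
  - exists (dcomp j x). apply is_derive_comp_line; auto.
  - apply (cont_ext_loc m (dcomp j) _ x e He); [|apply cont_dcomp; auto].
    intros y Hy; rewrite partial_comp; auto.
  - intros k Hk. split.
    + exists (d2comp j k x). eapply is_derive_ext_loc; [|apply is_derive_dcomp_line; auto].
      eapply filter_imp; [|exact (open_m_line m W x k Ho Wx Hk)].
      intros t Wt; simpl. rewrite partial_comp; auto.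
    + apply (cont_ext_loc m (d2comp j k) _ x e He); [|apply cont_d2comp; auto].
      intros y Hy; rewrite partial2_comp; auto.
Qed.

Lemma lap_comp x : W x -> lap m F x = rsum m (fun k => d2comp k k x).
Proof. intros Wx. apply rsum_ext. intros k Hk. apply partial2_comp; auto. Qed.

End ChainRule.

(** * Fuglede's criterion *)

Lemma open_m_preimage m W (Φ : pt -> C) (V : R -> R -> Prop) :
  open_m m W -> (forall x, W x -> ccont m Φ x) -> open_m 2 (fun y => V (y 0%nat) (y 1%nat)) ->
  open_m m (fun x => W x /\ V (Re (Φ x)) (Im (Φ x))).
Proof.
  intros Ho Hc HV x [Wx Vx].
  destruct (Ho x Wx) as [e1 [He1 K1]].
  destruct (HV (pt2 (Re (Φ x)) (Im (Φ x))) Vx) as [e2 [He2 K2]].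
  destruct (Hc x Wx) as [C1 C2].
  destruct (C1 e2 He2) as [d1 [Hd1 L1]]. destruct (C2 e2 He2) as [d2 [Hd2 L2]].
  exists (Rmin e1 (Rmin d1 d2)). split; [repeat apply Rmin_pos; auto|].
  intros y Hy. pose proof (Rmin_l e1 (Rmin d1 d2)); pose proof (Rmin_r e1 (Rmin d1 d2)).
  pose proof (Rmin_l d1 d2); pose proof (Rmin_r d1 d2).
  split; [apply K1, (near_m_mono _ _ _ _ _ Hy); lra|].
  apply (K2 (pt2 (Re (Φ y)) (Im (Φ y)))). intros k Hk. destruct k as [|[|k]]; [| |lia].
  - apply L1, (near_m_mono _ _ _ _ _ Hy); lra.
  - apply L2, (near_m_mono _ _ _ _ _ Hy); lra.
Qed.

(* The trace equals [g_uu Re κ + ½ (g_uv + g_vu) Im κ + g_u Re τ + g_v Im τ + Δg Σ_k (Im ∂_kΦ)²]. *)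
Lemma trace_d2comp_zero m g (Φ : pt -> C) Φ1 Φ2 x :
  csum m (fun k => Φ1 k x * Φ1 k x)%C = 0%C -> csum m (fun k => Φ2 k k x) = 0%C ->
  du (du g) (Re (Φ x)) (Im (Φ x)) + dv (dv g) (Re (Φ x)) (Im (Φ x)) = 0 ->
  rsum m (fun k => d2comp g (fun x => Re (Φ x)) (fun x => Im (Φ x))
     (fun j x => Re (Φ1 j x)) (fun j x => Im (Φ1 j x))
     (fun j k x => Re (Φ2 j k x)) (fun j k x => Im (Φ2 j k x)) k k x) = 0.
Proof.
  intros K T Lap.
  assert (KR := f_equal Re K). assert (KI := f_equal Im K).
  assert (TR := f_equal Re T). assert (TI := f_equal Im T).
  rewrite Re_csum in KR, TR. rewrite Im_csum in KI, TI. simpl in KR, KI, TR, TI.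
  set (u := Re (Φ x)) in *; set (v := Im (Φ x)) in *.
  unfold d2comp.
  rewrite (rsum_ext _ _ (fun k =>
     du (du g) u v * (Re (Φ1 k x) * Re (Φ1 k x) - Im (Φ1 k x) * Im (Φ1 k x))
     + ((dv (du g) u v + du (dv g) u v) / 2) * (Re (Φ1 k x) * Im (Φ1 k x) + Im (Φ1 k x) * Re (Φ1 k x))
     + du g u v * Re (Φ2 k k x) + dv g u v * Im (Φ2 k k x)
     + (du (du g) u v + dv (dv g) u v) * (Im (Φ1 k x) * Im (Φ1 k x))))
    by (intros k Hk; unfold u, v; field).
  rewrite !rsum_plus, !rsum_scal. unfold Re, Im in *. rewrite KR, KI, TR, TI, Lap. ring.
Qed.

Lemma harmonic_comp_real m W Φ Φ1 Φ2 (V : R -> R -> Prop) (g : R -> R -> R) :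
  open_m m W -> C2_with m W Φ Φ1 Φ2 ->
  (forall x, W x -> csum m (fun k => Φ1 k x * Φ1 k x)%C = 0%C /\ csum m (fun k => Φ2 k k x) = 0%C) ->
  open_m 2 (fun y => V (y 0%nat) (y 1%nat)) ->
  C2_on 2 (fun y => V (y 0%nat) (y 1%nat)) (fun y => g (y 0%nat) (y 1%nat)) ->
  (forall y, V (y 0%nat) (y 1%nat) -> lap 2 (fun y => g (y 0%nat) (y 1%nat)) y = 0) ->
  C2_on m (fun x => W x /\ V (Re (Φ x)) (Im (Φ x))) (fun x => g (Re (Φ x)) (Im (Φ x))) /\
  forall x, W x /\ V (Re (Φ x)) (Im (Φ x)) -> lap m (fun x => g (Re (Φ x)) (Im (Φ x))) x = 0.
Proof.
  intros Ho [D DD] TK HoV C2g Lg.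
  set (W' := fun x => W x /\ V (Re (Φ x)) (Im (Φ x))).
  assert (S : forall x, W' x -> W x) by (intros x [A _]; auto).
  assert (Ho' : open_m m W') by (apply open_m_preimage; auto; intros x Wx; apply (D x Wx)).
  assert (RΦ : forall G G1, C1_with m W G G1 ->
     C1_real_with m W' (fun x => Re (G x)) (fun j x => Re (G1 j x)) /\
     C1_real_with m W' (fun x => Im (G x)) (fun j x => Im (G1 j x))).
  { intros G G1 DG. apply C1_real_with_of_C1_with, (C1_with_sub _ W); auto. }
  assert (Lg' : forall x, W' x -> locally_2d (C2_at g) (Re (Φ x)) (Im (Φ x)))
    by (intros x [_ Vx]; apply (C2_at_locally V); auto).
  set (a := fun j x => Re (Φ1 j x)); set (b := fun j x => Im (Φ1 j x)).
  set (a2 := fun j k x => Re (Φ2 j k x)); set (b2 := fun j k x => Im (Φ2 j k x)).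
  split.
  - apply (C2_on_comp m W' g _ _ a b a2 b2); auto;
      try apply RΦ; auto; intros j Hj; apply RΦ; auto.
  - intros x Wx'. rewrite (lap_comp m W' g _ _ a b a2 b2); auto;
      try apply RΦ; auto; try (intros j Hj; apply RΦ; auto).
    destruct Wx' as [Wx Vx]. destruct (TK x Wx) as [K T].
    apply trace_d2comp_zero; auto.
    pose proof (Lg (pt2 (Re (Φ x)) (Im (Φ x))) Vx) as L.
    change (0 + du (du g) (Re (Φ x)) (Im (Φ x)) + dv (dv g) (Re (Φ x)) (Im (Φ x)) = 0) in L. lra.
Qed.

Lemma harmonic_morphism_of_isotropic m W Φ Φ1 Φ2 :
  open_m m W -> C2_with m W Φ Φ1 Φ2 ->
  (forall x, W x -> csum m (fun k => Φ1 k x * Φ1 k x)%C = 0%C /\ csum m (fun k => Φ2 k k x) = 0%C) ->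
  harmonic_morphism m W Φ.
Proof.
  intros Ho C TK. split; auto. intros U f [HoU [Cre [Cim Hl]]] _.
  destruct (harmonic_comp_real m W Φ Φ1 Φ2 (fun u v => U (u, v)) (fun u v => Re (f (u, v)))
              Ho C TK HoU Cre) as [C1 L1]; [intros y Hy; apply (Hl y Hy)|].
  destruct (harmonic_comp_real m W Φ Φ1 Φ2 (fun u v => U (u, v)) (fun u v => Im (f (u, v)))
              Ho C TK HoU Cim) as [C2 L2]; [intros y Hy; apply (Hl y Hy)|].
  pose proof (open_m_preimage m W Φ (fun u v => U (u, v)) Ho
                (fun x Wx => proj1 (proj1 C x Wx)) HoU) as Ho'.
  assert (EW : (fun x => W x /\ U (Re (Φ x), Im (Φ x))) = (fun x => W x /\ U (Φ x)))
    by (apply functional_extensionality; intros; rewrite pair_re_im; auto).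
  assert (E1 : (fun x => Re (f (Re (Φ x), Im (Φ x)))) = (fun x => Re (f (Φ x))))
    by (apply functional_extensionality; intros; rewrite pair_re_im; auto).
  assert (E2 : (fun x => Im (f (Re (Φ x), Im (Φ x)))) = (fun x => Im (f (Φ x))))
    by (apply functional_extensionality; intros; rewrite pair_re_im; auto).
  cbv beta in C1, L1, C2, L2, Ho'. rewrite EW, E1 in C1. rewrite EW, E2 in C2. rewrite EW in Ho'.
  split; [exact Ho'|split; [exact C1|split; [exact C2|]]].
  intros y [Wy Uy]. rewrite <- E1, <- E2.
  split; [apply L1|apply L2]; rewrite pair_re_im; auto.
Qed.

Definition kron (a k : nat) : R := if Nat.eqb a k then 1 else 0.

Lemma is_cderive_coord (x : pt) j i : is_cderive (fun t => RtoC (upd x j t i)) (x j) (RtoC (kron i j)).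
Proof.
  split; simpl; [|apply is_derive_R_const].
  unfold kron, upd. destruct (Nat.eqb i j); [apply is_derive_R_id|apply is_derive_R_const].
Qed.

Lemma C1_with_coord m W i : (i < m)%nat ->
  C1_with m W (fun x => RtoC (x i)) (fun j _ => RtoC (kron i j)).
Proof.
  intros Hi x Wx. split; [split; simpl; [apply cont_coord; auto|apply cont_const]|].
  intros j Hj; split; [apply is_cderive_coord|apply ccont_const].
Qed.

Definition has_C2 m W G := exists G1 G2, C2_with m W G G1 G2.

Lemma has_C2_const m W c : has_C2 m W (fun _ => c).
Proof. eexists _, _; apply C2_with_const. Qed.

Lemma has_C2_coord m W i : (i < m)%nat -> has_C2 m W (fun x => RtoC (x i)).
Proof.
  intros Hi. exists (fun j _ => RtoC (kron i j)), (fun _ _ _ => 0%C).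
  split; [apply C1_with_coord; auto|intros; apply C1_with_const].
Qed.

Lemma has_C2_plus m W G H : has_C2 m W G -> has_C2 m W H -> has_C2 m W (fun x => G x + H x)%C.
Proof. intros [G1 [G2 CG]] [H1 [H2 CH]]. eexists _, _; apply (C2_with_plus _ _ _ _ _ _ _ _ CG CH). Qed.

Lemma has_C2_mult m W G H : has_C2 m W G -> has_C2 m W H -> has_C2 m W (fun x => G x * H x)%C.
Proof. intros [G1 [G2 CG]] [H1 [H2 CH]]. eexists _, _; apply (C2_with_mult _ _ _ _ _ _ _ _ CG CH). Qed.

Lemma has_C2_ext m W G G' : (forall x, G x = G' x) -> has_C2 m W G -> has_C2 m W G'.
Proof. intros E; replace G' with G; auto. apply functional_extensionality; auto. Qed.

Lemma has_C2_csum m W N (F : nat -> pt -> C) : (forall i, (i < N)%nat -> has_C2 m W (F i)) ->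
  has_C2 m W (fun x => csum N (fun i => F i x)).
Proof.
  induction N; intros H; simpl; [apply has_C2_const|].
  apply has_C2_plus; [apply IHN; auto|apply H; auto].
Qed.

Lemma has_C2_quad m W a : (3 <= m)%nat -> has_C2 m W (quad a).
Proof.
  intros Hm. unfold quad. apply has_C2_csum; intros i Hi. apply has_C2_csum; intros j Hj.
  apply (has_C2_ext m W (fun x => a i j * (RtoC (x i) * RtoC (x j)))%C);
    [intros; rewrite RtoC_mult; reflexivity|].
  apply has_C2_mult; [apply has_C2_const|apply has_C2_mult; apply has_C2_coord; lia].
Qed.

Lemma C1_with_partial_indep m W G G1 x k : C1_with m W G G1 -> W x -> (k < m)%nat ->
  (forall t, G (upd x k t) = G x) -> G1 k x = 0%C.
Proof.
  intros D Wx Hk E. destruct (proj2 (D x Wx) k Hk) as [c _].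
  exact (is_cderive_const_fun _ _ _ _ E c).
Qed.

Lemma cpartial_of_C1_with m k (F : pt -> C) (F1 : nat -> pt -> C) :
  C1_with m (fun _ => True) F F1 -> (k < m)%nat -> forall x, cpartial k F x = F1 k x.
Proof.
  intros D Hk x. destruct (proj2 (D x I) k Hk) as [[A B] _].
  unfold cpartial, partial. rewrite <- (pair_re_im (F1 k x)).
  f_equal; apply is_derive_unique; auto.
Qed.

Lemma cpartial_ext k (F G : pt -> C) x : (forall y, F y = G y) -> cpartial k F x = cpartial k G x.
Proof. intros E. replace G with F; auto. apply functional_extensionality; auto. Qed.

Section Quadratic.

Variables (m : nat) (a : nat -> nat -> C) (P1 : nat -> pt -> C) (P2 : nat -> nat -> pt -> C).
Hypotheses (Hm : (3 <= m)%nat) (HC : C2_with m (fun _ => True) (quad a) P1 P2).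

Lemma quad_partial_z x k : (3 <= k)%nat -> (k < m)%nat -> P1 k x = 0%C.
Proof.
  intros Hk Hkm. apply (C1_with_partial_indep m _ _ _ x k (proj1 HC)); auto.
  intros t. unfold quad, upd. destruct k as [|[|[|k]]]; [lia..|reflexivity].
Qed.

Lemma quad_partial2_z x k : (3 <= k)%nat -> (k < m)%nat -> P2 k k x = 0%C.
Proof.
  intros Hk Hkm. apply (C1_with_partial_indep m _ _ _ x k (proj2 HC k Hkm)); auto.
  intros t; rewrite !quad_partial_z; auto.
Qed.

Lemma kappa_quad x : kappa 3 (quad a) (quad a) x = csum 3 (fun k => P1 k x * P1 k x)%C.
Proof.
  apply csum_ext; intros k Hk. rewrite (cpartial_of_C1_with m k _ P1 (proj1 HC)); auto; lia.
Qed.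

Lemma tension_quad x : tension 3 (quad a) x = csum 3 (fun k => P2 k k x).
Proof.
  apply csum_ext; intros k Hk.
  rewrite (cpartial_ext k (cpartial k (quad a)) (P1 k))
    by (intros; apply (cpartial_of_C1_with m k _ P1 (proj1 HC)); lia).
  apply (cpartial_of_C1_with m k _ _ (proj2 HC k ltac:(lia))); lia.
Qed.

End Quadratic.

(** * A totally isotropic subspace at each point *)

Definition dz (i k : nat) : C := (kron (2 * i + 3) k, kron (2 * i + 4) k).

Lemma C1_with_zco m W i : (2 * i + 4 < m)%nat -> C1_with m W (fun x => zco x i) (fun j _ => dz i j).
Proof.
  intros Hi x Wx. split; [split; simpl; apply cont_coord; lia|].
  intros j Hj; split; [|apply ccont_const].
  split; [apply (is_cderive_coord x j (2 * i + 3))|apply (is_cderive_coord x j (2 * i + 4))].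
Qed.

Lemma rsum_kron m a b :
  rsum m (fun k => kron a k * kron b k) = if andb (Nat.eqb a b) (Nat.ltb a m) then 1 else 0.
Proof.
  induction m; simpl; [destruct (Nat.eqb a b); reflexivity|]. rewrite IHm. unfold kron.
  destruct (Nat.eqb_spec a b), (Nat.ltb_spec a m), (Nat.ltb_spec a (S m)),
    (Nat.eqb_spec a m), (Nat.eqb_spec b m); simpl; try lia; ring.
Qed.

Lemma csum_dz_dz m i l : (2 * i + 4 < m)%nat -> (2 * l + 4 < m)%nat ->
  csum m (fun k => dz i k * dz l k)%C = 0%C.
Proof.
  intros Hi Hl. rewrite <- (pair_re_im (csum _ _)), Re_csum, Im_csum.
  unfold dz, Cmult, Re, Im; cbn [fst snd].
  rewrite rsum_minus, rsum_plus, !rsum_kron.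
  repeat match goal with |- context [Nat.eqb ?x ?y] => destruct (Nat.eqb_spec x y) end;
  repeat match goal with |- context [Nat.ltb ?x ?y] => destruct (Nat.ltb_spec x y) end;
  simpl; try lia; apply injective_projections; simpl; ring.
Qed.

Lemma csum_span_dz_isotropic n m (c e : nat -> C) : (2 * n + 3 <= m)%nat ->
  csum m (fun k => csum n (fun i => c i * dz i k) * csum n (fun l => e l * dz l k))%C = 0%C.
Proof.
  intros Hm.
  rewrite (csum_ext m _ (fun k => csum n (fun i => csum n (fun l => (c i * e l) * (dz i k * dz l k)))))%C.
  2:{ intros k Hk. rewrite csum_mult_r. apply csum_ext; intros i Hi.
      rewrite <- csum_scal. apply csum_ext; intros; ring. }
  rewrite csum_swap, <- (csum_zero n). apply csum_ext; intros i Hi.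
  rewrite csum_swap, <- (csum_zero n). apply csum_ext; intros l Hl.
  rewrite csum_scal, csum_dz_dz by lia. ring.
Qed.

Lemma dz_x_coord i k : (k < 3)%nat -> dz i k = 0%C.
Proof.
  intros Hk. unfold dz, kron.
  destruct (Nat.eqb_spec (2 * i + 3) k), (Nat.eqb_spec (2 * i + 4) k); try lia; reflexivity.
Qed.

(* [P1 k x] plays the role of [∂_k p (x)], and [dz i] is [∇z_i]. *)
Definition span_dp_dz n m (P1 : nat -> pt -> C) (x : pt) (v : nat -> C) :=
  exists (c0 : C) (c : nat -> C),
    forall k, (k < m)%nat -> v k = (c0 * P1 k x + csum n (fun i => c i * dz i k))%C.

Section Span.

Variables (n m : nat) (P1 : nat -> pt -> C).
Hypotheses (Em : m = (2 * n + 3)%nat)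
  (HP : forall x k, (3 <= k)%nat -> (k < m)%nat -> P1 k x = 0%C)
  (HK : forall x, csum 3 (fun k => P1 k x * P1 k x)%C = 0%C).

Lemma dp_dz_orthogonal x c k : (k < m)%nat -> (P1 k x * csum n (fun i => c i * dz i k))%C = 0%C.
Proof.
  intros Hk. destruct (Nat.lt_ge_cases k 3).
  - rewrite <- (Cmult_0_r (P1 k x)), <- (csum_zero n). f_equal.
    apply csum_ext; intros i Hi. rewrite dz_x_coord; auto. ring.
  - rewrite HP by auto. ring.
Qed.

Lemma csum_dp_dp x : csum m (fun k => P1 k x * P1 k x)%C = 0%C.
Proof. rewrite (csum_trunc m 3); [apply HK|lia|]. intros k H3 Hk. rewrite HP; auto. ring. Qed.

Lemma totally_isotropic_span W : totally_isotropic_on m W (span_dp_dz n m P1).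
Proof.
  intros x _. split; [|split].
  - exists 0%C, (fun _ => 0%C). intros k Hk.
    rewrite (csum_ext n _ (fun _ => 0%C)) by (intros; ring). rewrite csum_zero; ring.
  - intros v w a b [c0 [c Hv]] [d0 [d Hw]].
    exists (a * c0 + b * d0)%C, (fun i => a * c i + b * d i)%C. intros k Hk.
    rewrite Hv, Hw by auto.
    rewrite (csum_ext n (fun i => (a * c i + b * d i) * dz i k)%C
      (fun i => a * (c i * dz i k) + b * (d i * dz i k))%C) by (intros; ring).
    rewrite csum_lin2. ring.
  - intros v w [c0 [c Hv]] [d0 [d Hw]].
    rewrite (csum_ext m _ (fun k => (c0 * d0) * (P1 k x * P1 k x) + RtoC 1 *
         (csum n (fun i => c i * dz i k) * csum n (fun l => d l * dz l k)))%C).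
    + rewrite csum_lin2, csum_span_dz_isotropic, csum_dp_dp by lia. ring.
    + intros k Hk. rewrite Hv, Hw by auto.
      pose proof (dp_dz_orthogonal x c k Hk). pose proof (dp_dz_orthogonal x d k Hk).
      transitivity ((c0 * d0) * (P1 k x * P1 k x)
        + RtoC 1 * (csum n (fun i => c i * dz i k) * csum n (fun l => d l * dz l k))
        + c0 * (P1 k x * csum n (fun i => d i * dz i k))
        + d0 * (P1 k x * csum n (fun i => c i * dz i k)))%C; [ring|].
      rewrite H, H0. ring.
Qed.

End Span.

Section PhiHat.

Variables (n m : nat) (W : pt -> Prop) (P1 : nat -> pt -> C).
Hypotheses (Em : m = (2 * n + 3)%nat) (HS : totally_isotropic_on m W (span_dp_dz n m P1)).

Let ih := isotropic_harmonic m W (span_dp_dz n m P1).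

Lemma isotropic_harmonic_zco i : (i < n)%nat -> ih (fun x => zco x i).
Proof.
  intros Hi. exists (fun j _ => dz i j), (fun _ _ _ => 0%C).
  split; [split; [apply C1_with_zco; lia|intros; apply C1_with_const]|].
  intros x Wx. split; [|apply csum_zero].
  exists 0%C, (fun l => if Nat.eqb l i then RtoC 1 else RtoC 0). intros k Hk.
  rewrite csum_indicator, (proj2 (Nat.ltb_lt _ _) Hi). ring.
Qed.

Lemma isotropic_harmonic_monomial (w : nat -> nat) L : (forall j, In j L -> (w j < n)%nat) ->
  ih (fun x => fold_right Cmult (RtoC 1) (map (fun j => zco x (w j)) L)).
Proof.
  induction L as [|j L IH]; intros Hw; simpl; [apply isotropic_harmonic_const; auto|].
  apply isotropic_harmonic_mult; auto.
  - apply isotropic_harmonic_zco, Hw; simpl; auto.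
  - apply IH; intros; apply Hw; simpl; auto.
Qed.

Lemma isotropic_harmonic_hp_eval d l : hp_wf n d l -> ih (fun x => hp_eval d l (zco x)).
Proof.
  induction l as [|t l IH]; intros Hw; simpl; [apply isotropic_harmonic_const; auto|].
  apply isotropic_harmonic_plus; auto.
  - apply isotropic_harmonic_mult; auto; [apply isotropic_harmonic_const; auto|].
    apply isotropic_harmonic_monomial. intros j Hj. apply in_seq in Hj.
    apply (Hw t); simpl; auto; lia.
  - apply IH. intros t' Ht' j Hj; apply (Hw t'); simpl; auto.
Qed.

Lemma isotropic_harmonic_quad a P2 : C2_with m (fun _ => True) (quad a) P1 P2 ->
  (forall x k, (3 <= k)%nat -> (k < m)%nat -> P2 k k x = 0%C) ->
  (forall x, csum 3 (fun k => P2 k k x) = 0%C) ->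
  ih (quad a).
Proof.
  intros HC Z T. exists P1, P2. split; [apply (C2_with_sub _ (fun _ => True)); auto|].
  intros x Wx. split.
  - exists (RtoC 1), (fun _ => 0%C). intros k Hk.
    rewrite (csum_ext n _ (fun _ => 0%C)) by (intros; ring). rewrite csum_zero. ring.
  - rewrite (csum_trunc m 3); [apply T|lia|intros; apply Z; auto].
Qed.

Lemma isotropic_harmonic_Phi_hat d a lP lQ :
  (forall x, W x -> Phi_dom d a lQ x) -> ih (quad a) -> hp_wf n d lP -> hp_wf n d lQ ->
  ih (Phi_hat d a lP lQ).
Proof.
  intros Dom Hq HP HQ.
  apply (isotropic_harmonic_ext _ _ _
           (fun x => (halfpow d (quad a x) + hp_eval d lP (zco x)) * / hp_eval d lQ (zco x))%C);
    [intros; reflexivity|].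
  apply isotropic_harmonic_mult; auto; [apply isotropic_harmonic_plus; auto|].
  - unfold halfpow. destruct (Nat.even d) eqn:Ed; apply isotropic_harmonic_cpow; auto.
    apply isotropic_harmonic_csqrt; auto. intros x Wx.
    destruct (Dom x Wx) as [_ [E|E]]; [congruence|].
    destruct (Req_dec (Im (quad a x)) 0); [left; apply Rnot_le_lt|right]; auto.
  - apply isotropic_harmonic_hp_eval; auto.
  - apply isotropic_harmonic_inv; [auto|apply isotropic_harmonic_hp_eval; auto|].
    intros x Wx; apply (Dom x Wx).
Qed.

End PhiHat.

Lemma open_Phi_dom m d a lQ : (forall x, ccont m (quad a) x) ->
  (forall x, Phi_dom d a lQ x -> ccont m (fun x => hp_eval d lQ (zco x)) x) ->
  open_m m (Phi_dom d a lQ).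
Proof.
  intros Cq CQ x [HQ Hq].
  assert (A : exists e1, 0 < e1 /\ forall y, near_m m x y e1 -> hp_eval d lQ (zco y) <> 0%C).
  { destruct (CQ x (conj HQ Hq)) as [C1 C2].
    destruct (Req_dec (Re (hp_eval d lQ (zco x))) 0) as [E1|E1];
      [destruct (Req_dec (Im (hp_eval d lQ (zco x))) 0) as [E2|E2]|].
    - exfalso; apply HQ. rewrite <- (pair_re_im (hp_eval d lQ (zco x))), E1, E2; reflexivity.
    - destruct (cont_at_m_neq0 _ _ _ C2 E2) as [e [He K]]. exists e; split; auto.
      intros y Hy E; apply (K y Hy); rewrite E; reflexivity.
    - destruct (cont_at_m_neq0 _ _ _ C1 E1) as [e [He K]]. exists e; split; auto.
      intros y Hy E; apply (K y Hy); rewrite E; reflexivity. }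
  assert (B : exists e2, 0 < e2 /\ forall y, near_m m x y e2 ->
      (Nat.even d = true \/ ~ (Im (quad a y) = 0 /\ Re (quad a y) <= 0))).
  { destruct Hq as [Hq|Hq]; [exists 1; split; [lra|]; auto|].
    destruct (Cq x) as [C1 C2].
    destruct (Req_dec (Im (quad a x)) 0) as [E2|E2].
    - assert (P : 0 < Re (quad a x)) by (apply Rnot_le_lt; intro; apply Hq; auto).
      destruct (cont_at_m_pos _ _ _ C1 P) as [e [He K]]. exists e; split; auto.
      intros y Hy; right; intros [_ F]; specialize (K y Hy); lra.
    - destruct (cont_at_m_neq0 _ _ _ C2 E2) as [e [He K]]. exists e; split; auto.
      intros y Hy; right; intros [F _]; apply (K y Hy); auto. }
  destruct A as [e1 [He1 K1]]; destruct B as [e2 [He2 K2]].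
  exists (Rmin e1 e2); split; [apply Rmin_pos; auto|].
  intros y Hy; split.
  - apply K1, (near_m_mono _ _ _ _ _ Hy), Rmin_l.
  - apply K2, (near_m_mono _ _ _ _ _ Hy), Rmin_r.
Qed.

(* Linear independence of [P_d] and [Q_d] only makes [Φ̂_d] non-constant. *)
Theorem mainTheorem1 (n d : nat) (a : nat -> nat -> C) (lP lQ : hpoly) :
  (1 <= n)%nat -> (1 <= d)%nat ->
  (forall x : pt, tension 3 (quad a) x = RtoC 0 /\ kappa 3 (quad a) (quad a) x = RtoC 0) ->
  hp_wf n d lP -> hp_wf n d lQ ->
  (forall al be : C,
     (forall z : nat -> C,
        Cplus (Cmult al (hp_eval d lP z)) (Cmult be (hp_eval d lQ z)) = RtoC 0) ->
     al = RtoC 0 /\ be = RtoC 0) ->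
  harmonic_morphism (2 * n + 3) (Phi_dom d a lQ) (Phi_hat d a lP lQ).
Proof.
  intros Hn Hd Hq HP HQ _.
  set (m := (2 * n + 3)%nat). set (W := Phi_dom d a lQ).
  assert (Hm : (3 <= m)%nat) by lia.
  destruct (has_C2_quad m (fun _ => True) a Hm) as [P1 [P2 HC]].
  assert (HS : totally_isotropic_on m W (span_dp_dz n m P1)).
  { apply totally_isotropic_span; auto; intros x.
    - apply (quad_partial_z m a P1 P2); auto.
    - rewrite <- (kappa_quad m a P1 P2); auto. apply Hq. }
  assert (Hp : isotropic_harmonic m W (span_dp_dz n m P1) (quad a)).
  { apply (isotropic_harmonic_quad n m W P1 eq_refl a P2 HC).
    - intros x k; apply (quad_partial2_z m a P1 P2); auto.
    - intros x. rewrite <- (tension_quad m a P1 P2); auto. apply Hq. }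
  destruct (isotropic_harmonic_hp_eval n m W P1 eq_refl HS d lQ HQ) as [Q1 [Q2 [[CQ _] _]]].
  destruct (isotropic_harmonic_Phi_hat n m W P1 eq_refl HS d a lP lQ)
    as [F1 [F2 [CF TF]]]; auto.
  apply (harmonic_morphism_of_isotropic m W _ F1 F2); auto.
  - apply open_Phi_dom; [intros x; apply (proj1 HC x I)|intros x Wx; apply (CQ x Wx)].
  - intros x Wx. destruct (TF x Wx) as [iF tF]. split; auto. apply (HS x Wx); auto.
Qed.
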